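(* Let $H$ be a graph and $Y$ a minimal blocking set of $H$. Let $H'$ be obtained from $H$ by adding a new vertex $v$ adjacent exactly to the vertices of $Y$. Then $\mathrm{OPT}(H')=\mathrm{OPT}(H)+1$ and $Y\cup\{v\}$ is a minimal blocking set of $H'$.
   Context: $\mathrm{OPT}(G)$ is the minimum vertex cover size. $Y\subseteq V(G)$ is a blocking set of $G$ if no vertex cover of $G$ of size $\mathrm{OPT}(G)$ contains $Y$; minimal if no proper subset is a blocking set. *)

From mathcomp Require Import all_boot.
Set Implicit Arguments. Unset Strict Implicit. Unset Printing Implicit Defensive.

Definition simple_graph (T : finType) (e : rel T) : Prop :=
  symmetric e /\ irreflexive e.

Definition vertex_cover (T : finType) (e : rel T) (C : {set T}) : bool :=
  [forall x, forall y, e x y ==> (x \in C) || (y \in C)].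

Lemma vertex_cover_exists (T : finType) (e : rel T) :
  exists n, [exists C : {set T}, vertex_cover e C && (#|C| == n)].
Proof.
exists #|[set: T]|; apply/existsP; exists [set: T].
rewrite eqxx andbT; apply/forallP => x; apply/forallP => y.
by rewrite in_setT; apply/implyP.
Qed.

Definition OPT (T : finType) (e : rel T) : nat := ex_minn (vertex_cover_exists e).

Definition blocking (T : finType) (e : rel T) (Y : {set T}) : Prop :=
  forall C : {set T}, vertex_cover e C -> #|C| = OPT e -> ~ (Y \subset C).

Definition minimal_blocking (T : finType) (e : rel T) (Y : {set T}) : Prop :=
  blocking e Y /\ forall Z : {set T}, Z \proper Y -> ~ blocking e Z.

Definition add_vertex (T : finType) (e : rel T) (Y : {set T}) : rel (option T) :=
  fun a b => match a, b with
             | Some x, Some y => e x y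
             | None, Some y => y \in Y
             | Some x, None => x \in Y
             | None, None => false
             end.

From mathcomp Require Import all_boot.
Set Implicit Arguments. Unset Strict Implicit. Unset Printing Implicit Defensive.

(* A vertex cover of H' is a cover C of H, plus possibly v, where C must contain Y
   when v is left out.  Since Y is blocking, a cover of H containing Y has more than
   OPT(H) vertices; hence OPT(H') = OPT(H) + 1, and a minimum cover of H' must contain
   v and restrict to a minimum cover of H, which cannot contain Y.  For minimality,
   minimality of Y gives, for y in Y, a minimum cover C of H containing Y - y: then
   C + v is a minimum cover of H' containing Y - y + v, and C + y one containing Y. *)

Section VertexCover.
Variables (T : finType) (e : rel T).

Lemma vertex_coverP (C : {set T}) :
  reflect (forall x y, e x y -> x \in C \/ y \in C) (vertex_cover e C).
Proof.
apply: (iffP forallP) => [coverC x y exy | coverC x].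
  by apply/orP; move/forallP/(_ y)/implyP: (coverC x); apply.
by apply/forallP => y; apply/implyP => /coverC /orP.
Qed.

Lemma vertex_cover_subset (C D : {set T}) :
  C \subset D -> vertex_cover e C -> vertex_cover e D.
Proof.
move=> /subsetP sCD /vertex_coverP coverC; apply/vertex_coverP => x y /coverC.
by case=> [/sCD | /sCD]; [left | right].
Qed.

Lemma OPT_leq_cover (C : {set T}) : vertex_cover e C -> OPT e <= #|C|.
Proof.
move=> coverC; rewrite /OPT; case: ex_minnP => m _; apply.
by apply/existsP; exists C; rewrite coverC eqxx.
Qed.

Lemma min_vertex_cover_exists : exists2 C, vertex_cover e C & #|C| = OPT e.
Proof. by rewrite /OPT; case: ex_minnP => m /existsP[C /andP[coverC /eqP]]; exists C. Qed.

Lemma not_blocking_cover (Z C : {set T}) :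
  vertex_cover e C -> #|C| <= OPT e -> Z \subset C -> ~ blocking e Z.
Proof.
move=> coverC leC sZC blockZ; apply: (blockZ C coverC) => //.
by apply/eqP; rewrite eqn_leq leC OPT_leq_cover.
Qed.

Lemma blocking_cover_gt (Y C : {set T}) :
  blocking e Y -> vertex_cover e C -> Y \subset C -> OPT e < #|C|.
Proof.
move=> blockY coverC sYC; rewrite ltnNge; apply/negP => leC.
exact: not_blocking_cover coverC leC sYC blockY.
Qed.

Lemma blocking_neq0 (Y : {set T}) : blocking e Y -> exists y, y \in Y.
Proof.
have [C coverC sizeC] := min_vertex_cover_exists.
case: (set_0Vmem Y) => [-> blockY | [y Yy]]; last by exists y.
by case: (blockY C coverC sizeC); rewrite sub0set.
Qed.

Lemma minimal_blocking_cover_del (Y : {set T}) y :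
  minimal_blocking e Y -> y \in Y ->
  exists C, [/\ vertex_cover e C, #|C| = OPT e & Y :\ y \subset C].
Proof.
move=> [_ minY] Yy.
case: (boolP [exists C, [&& vertex_cover e C, #|C| == OPT e & Y :\ y \subset C]]).
  by case/existsP => C /and3P[coverC /eqP sizeC sYC]; exists C.
move/existsPn => noC; case: (minY (Y :\ y)); first exact: properD1.
by move=> C coverC sizeC sYC; move: (noC C); rewrite coverC sizeC eqxx sYC.
Qed.

End VertexCover.

Section OptionSets.
Variable T : finType.

Definition opt_set (b : bool) (C : {set T}) : {set option T} :=
  if b then None |: Some @: C else Some @: C.

Lemma in_opt_set_None b C : (None \in opt_set b C) = b.
Proof.
rewrite /opt_set; case: b; first by rewrite setU11.
by apply/imsetP => -[].
Qed.

Lemma in_opt_set_Some b C x : (Some x \in opt_set b C) = (x \in C).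
Proof. by rewrite /opt_set; case: b; rewrite ?in_setU1 /= (mem_imset _ _ Some_inj). Qed.

Lemma opt_setP (C' : {set option T}) : exists b C, C' = opt_set b C.
Proof.
exists (None \in C'), (Some @^-1: C'); apply/setP => -[x|].
  by rewrite in_opt_set_Some inE.
by rewrite in_opt_set_None.
Qed.

Lemma card_opt_set b C : #|opt_set b C| = #|C| + b.
Proof.
have cardS : #|Some @: C| = #|C| by apply: card_imset; apply: Some_inj.
rewrite /opt_set; case: b; last by rewrite cardS addn0.
have notS : None \notin Some @: C by apply/imsetP => -[].
by rewrite cardsU1 notS cardS addnC.
Qed.

Lemma subset_opt_set b C b' D :
  (opt_set b C \subset opt_set b' D) = (b ==> b') && (C \subset D).
Proof.
apply/subsetP/andP => [sub | [bb' /subsetP sCD] [x|]].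
- split; first by apply/implyP; move: (sub None); rewrite !in_opt_set_None.
  by apply/subsetP => x; move: (sub (Some x)); rewrite !in_opt_set_Some.
- by rewrite !in_opt_set_Some; apply: sCD.
- by rewrite !in_opt_set_None; apply/implyP.
Qed.

Lemma proper_opt_set b C b' D :
  (opt_set b C \proper opt_set b' D) =
  [&& b ==> b', C \subset D & (b < b') || (C \proper D)].
Proof.
rewrite !properE !subset_opt_set.
by case: b; case: b'; case: (C \subset D); case: (D \subset C).
Qed.

End OptionSets.

Section AddVertex.
Variables (T : finType) (e : rel T) (Y : {set T}).

Lemma add_vertex_cover_opt_set b C :
  vertex_cover (add_vertex e Y) (opt_set b C) = vertex_cover e C && (b || (Y \subset C)).
Proof.
apply/vertex_coverP/andP => [coverC' | [/vertex_coverP coverC bY]].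
  split.
    by apply/vertex_coverP => x y /(coverC' (Some x) (Some y)); rewrite !in_opt_set_Some.
  case: b coverC' => // coverC'; apply/subsetP => y /(coverC' None (Some y)).
  by rewrite in_opt_set_None in_opt_set_Some; case.
move=> [x|] [y|] //= exy; rewrite ?in_opt_set_Some ?in_opt_set_None.
- exact: coverC.
- by case: b bY => [_ | /subsetP YC]; [right | left; apply: YC].
- by case: b bY => [_ | /subsetP YC]; [left | right; apply: YC].
Qed.

Lemma OPT_add_vertex : blocking e Y -> OPT (add_vertex e Y) = (OPT e).+1.
Proof.
move=> blockY; apply/eqP; rewrite eqn_leq; apply/andP; split.
  have [C coverC <-] := min_vertex_cover_exists e.
  rewrite -addn1 -(card_opt_set true); apply: OPT_leq_cover.
  by rewrite add_vertex_cover_opt_set coverC.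
have [C' coverC' <-] := min_vertex_cover_exists (add_vertex e Y).
move: coverC'; have [b [C ->]] := opt_setP C'.
rewrite add_vertex_cover_opt_set card_opt_set => /andP[coverC].
case: b => /= [_ | sYC]; first by rewrite addn1 ltnS OPT_leq_cover.
by rewrite addn0 (blocking_cover_gt blockY).
Qed.

Lemma add_vertex_blocking : blocking e Y -> blocking (add_vertex e Y) (opt_set true Y).
Proof.
move=> blockY C'; have [b [C ->]] := opt_setP C'.
rewrite add_vertex_cover_opt_set card_opt_set (OPT_add_vertex blockY) subset_opt_set.
move=> /andP[coverC _] sizeC /andP[/= b_true sYC].
by move: sizeC; rewrite b_true addn1 => -[sizeC]; apply: (blockY C).
Qed.

Lemma add_vertex_minimal_blocking :
  minimal_blocking e Y -> minimal_blocking (add_vertex e Y) (opt_set true Y).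
Proof.
move=> minY; have [blockY _] := minY.
split=> [|Z']; first exact: add_vertex_blocking.
have OPT' := OPT_add_vertex blockY.
have [b [D ->]] := opt_setP Z'; rewrite proper_opt_set implybT /= => /andP[sDY].
case: b => [/orP[// | /properP[_ [y Yy Dy]]] | _].
  have [C [coverC sizeC sYC]] := minimal_blocking_cover_del minY Yy.
  apply: (not_blocking_cover (C := opt_set true C)).
  - by rewrite add_vertex_cover_opt_set coverC.
  - by rewrite card_opt_set sizeC OPT' addn1.
  - by rewrite subset_opt_set /=; apply: subset_trans sYC; rewrite subsetD1 sDY Dy.
have [y Yy] := blocking_neq0 blockY.
have [C [coverC sizeC sYC]] := minimal_blocking_cover_del minY Yy.
have sYyC : Y \subset y |: C by rewrite -{1}(setD1K Yy) setUS.
apply: (not_blocking_cover (C := opt_set false (y |: C))).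
- rewrite add_vertex_cover_opt_set sYyC orbT andbT.
  by apply: vertex_cover_subset coverC; apply: subsetUr.
- by rewrite card_opt_set addn0 cardsU1 OPT' sizeC -add1n leq_add2r leq_b1.
- by rewrite subset_opt_set /= (subset_trans sDY sYyC).
Qed.

End AddVertex.

Theorem mainTheorem14 (T : finType) (e : rel T) (Y : {set T}) :
  simple_graph e ->
  minimal_blocking e Y ->
  OPT (add_vertex e Y) = (OPT e).+1 /\
  minimal_blocking (add_vertex e Y) (None |: [set Some y | y in Y]).
Proof.
move=> _ minY; split; first exact: OPT_add_vertex minY.1.
exact: add_vertex_minimal_blocking.
Qed.
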